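(* Let $n \geq 1$ be an integer and consider Nim on the hypercube $Q_n$ in which every edge has weight $1$, with the playing piece $\Delta$ starting at a vertex. Then the second player $P_2$ has a winning strategy if and only if $n$ is even.
   Context: Nim on a graph: two players agree on a finite simple undirected graph $G$ whose edges carry positive integer weights, and a starting vertex on which a playing piece $\Delta$ is placed. Players $P_1$ (who moves first) and $P_2$ alternate. On a turn, the player chooses an edge of positive weight incident with the vertex currently holding $\Delta$, lowers that edge's weight by a positive integer amount, and moves $\Delta$ to the other endpoint of that edge. Edges of weight $0$ are no longer playable. A player who cannot move loses. The hypercube $Q_n$ has as vertices the binary $n$-tuples, two being adjacent iff they differ in exactly one coordinate. *)

From mathcomp Require Import all_boot.
Set Implicit Arguments. Unset Strict Implicit. Unset Printing Implicit Defensive.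

(* Edge weights are a function w : T -> T -> nat, read only on
   edges (w x y = w y x is the weight of edge {x,y}). *)
Definition simple_graph (T : finType) (adj : rel T) : Prop :=
  irreflexive adj /\ symmetric adj.

Definition upd_weight (T : finType) (w : T -> T -> nat) (a b : T) (k : nat)
  : T -> T -> nat :=
  fun x y => if ((x == a) && (y == b)) || ((x == b) && (y == a)) then k else w x y.

(* The game is finite (total weight strictly decreases), so these inductive
   notions are exactly the existence of winning strategies. *)
Inductive nim_win (T : finType) (adj : rel T) : T -> (T -> T -> nat) -> Prop :=
| NimWin v w u k :
    adj v u -> 0 < w v u -> k < w v u ->
    nim_lose adj u (upd_weight w v u k) -> nim_win adj v w
with nim_lose (T : finType) (adj : rel T) : T -> (T -> T -> nat) -> Prop :=
| NimLose v w :
    (forall u k, adj v u -> 0 < w v u -> k < w v u ->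
       nim_win adj u (upd_weight w v u k)) -> nim_lose adj v w.

Definition hypercube_vertex (n : nat) := {ffun 'I_n -> bool}.
Definition hypercube_adj (n : nat) : rel (hypercube_vertex n) :=
  fun x y => #|[set i | x i != y i]| == 1.

Definition unit_weights (T : finType) (adj : rel T) : T -> T -> nat :=
  fun x y => if adj x y then 1 else 0.

From mathcomp Require Import all_boot.

Set Implicit Arguments. Unset Strict Implicit. Unset Printing Implicit Defensive.

(* With weights in {0, 1} a move just deletes the edge it uses.  If the piece
   sits in an independent set L and every vertex outside L has an even number
   of remaining edges into L, the mover must leave L through some edge u u';
   that makes the L-degree of u' odd, so the opponent can return into L along
   another edge u' z, restoring the invariant.  The mover eventually gets stuck.
   On Q_n with n even, take L to be the vertices at even distance from the
   start: every vertex outside L has all its n edges into L.  With n odd, the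
   first player moves to a neighbour y of the start v and then plays the same
   strategy with L the neighbourhood of v: v is left with n - 1 edges into L,
   and every other vertex has 0 or 2 of them. *)

Section ParityStrategy.

Variables (T : finType) (adj : rel T).

Definition binary_weights (w : T -> T -> nat) : Prop :=
  [/\ forall x y, w x y = w y x, forall x y, w x y <= 1
    & forall x y, 0 < w x y -> adj x y].

Definition live_deg (w : T -> T -> nat) (L : pred T) (x : T) : nat :=
  #|[set y | L y && (0 < w x y)]|.

Definition support_size (w : T -> T -> nat) : nat :=
  #|[set p : T * T | 0 < w p.1 p.2]|.

Lemma binary_weights_upd0 w a b :
  binary_weights w -> binary_weights (upd_weight w a b 0).
Proof.
case=> wC w_le1 w_adj; split=> x y; rewrite /upd_weight.
- rewrite (wC x y).
  by case: (x == a); case: (y == b); case: (x == b); case: (y == a).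
- by case: ifP.
- by case: ifP => // _; apply: w_adj.
Qed.

Lemma support_size_upd0 w a b :
  0 < w a b -> support_size (upd_weight w a b 0) < support_size w.
Proof.
move=> wab; apply/proper_card/properP; split.
  by apply/subsetP => p; rewrite !inE /upd_weight; case: ifP.
by exists (a, b); rewrite !inE /= /upd_weight ?eqxx.
Qed.

Lemma live_deg_upd0l w L a b :
  a != b -> 0 < w a b ->
  live_deg w L a = live_deg (upd_weight w a b 0) L a + L b.
Proof.
move=> neq_ab wab; rewrite /live_deg (cardsD1 b) inE wab andbT addnC.
congr (_ + _); apply: eq_card => y.
rewrite !inE /upd_weight eqxx (negbTE neq_ab) /=.
by case: (y == b); rewrite ?andbF.
Qed.

Lemma live_deg_upd0r w L a b :
  a != b -> 0 < w b a ->
  live_deg w L b = live_deg (upd_weight w a b 0) L b + L a.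
Proof.
move=> neq_ab wba; rewrite (live_deg_upd0l L _ wba); last by rewrite eq_sym.
by congr (_ + _); apply: eq_card => y; rewrite !inE /upd_weight orbC.
Qed.

Lemma live_deg_upd0_other w L a b x :
  x != a -> x != b -> live_deg (upd_weight w a b 0) L x = live_deg w L x.
Proof.
move=> neq_xa neq_xb; apply: eq_card => y.
by rewrite !inE /upd_weight (negbTE neq_xa) (negbTE neq_xb).
Qed.

Lemma odd_live_deg_neighbor w L x :
  odd (live_deg w L x) -> exists2 y, L y & 0 < w x y.
Proof.
move=> odd_x; have : 0 < live_deg w L x by case: (live_deg w L x) odd_x.
by rewrite card_gt0 => /set0Pn [y]; rewrite inE => /andP [Ly wxy]; exists y.
Qed.

Variable L : pred T.
Hypothesis L_independent : forall x y, adj x y -> L x -> ~~ L y.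

Lemma nim_lose_even_live_deg w u :
  binary_weights w -> L u ->
  (forall x, ~~ L x -> ~~ odd (live_deg w L x)) -> nim_lose adj u w.
Proof.
have [m lt_w_m] := ubnP (support_size w).
elim: m u w lt_w_m => // m IH u w lt_w_m wbin Lu even_out.
have [wC w_le1 w_adj] := wbin.
constructor=> u' k adj_uu' wuu' lt_k.
have -> : k = 0 by apply/eqP; rewrite -leqn0 -ltnS (leq_trans lt_k (w_le1 u u')).
have L'u' := L_independent adj_uu' Lu.
have neq_uu' : u != u' by apply: contraNneq L'u' => <-.
set w1 := upd_weight w u u' 0.
have wu'u : 0 < w u' u by rewrite wC.
have odd_u' : odd (live_deg w1 L u').
  by move: (even_out u' L'u'); rewrite (live_deg_upd0r L neq_uu' wu'u) Lu addn1 negbK.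
have [z Lz w1u'z] := odd_live_deg_neighbor odd_u'.
have neq_u'z : u' != z by apply: contraNneq L'u' => ->.
have w1bin : binary_weights w1 by apply: binary_weights_upd0.
have [_ _ w1_adj] := w1bin.
apply: (NimWin (w1_adj _ _ w1u'z) w1u'z w1u'z); apply: IH => //.
- rewrite -ltnS; apply: leq_trans _ lt_w_m; rewrite ltnS.
  exact: ltn_trans (support_size_upd0 w1u'z) (support_size_upd0 wuu').
- exact: binary_weights_upd0.
- move=> x L'x; have neq_xz : x != z by apply: contraNneq L'x => ->.
  have [->|neq_xu'] := eqVneq x u'.
    by move: odd_u'; rewrite (live_deg_upd0l L neq_u'z w1u'z) Lz addn1.
  have neq_xu : x != u by apply: contraNneq L'x => ->.
  by rewrite !live_deg_upd0_other //; apply: even_out.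
Qed.

End ParityStrategy.

Scheme nim_win_mut := Induction for nim_win Sort Prop
  with nim_lose_mut := Induction for nim_lose Sort Prop.

Lemma nim_win_not_lose (T : finType) (adj : rel T) u w :
  nim_win adj u w -> ~ nim_lose adj u w.
Proof.
move=> win_uw.
apply: (@nim_win_mut T adj (fun u w _ => ~ nim_lose adj u w)
                           (fun u w _ => ~ nim_win adj u w)) win_uw.
- move=> v w0 u0 k adj_vu pos lt_k _ IH lose_v.
  move: adj_vu pos lt_k IH; case: v w0 / lose_v => v w0 win_moves adj_vu pos lt_k.
  by apply; apply: win_moves.
- move=> v w0 _ IH win_v.
  move: IH; case: v w0 / win_v => v w0 u1 k1 adj_vu pos lt_k lose_u1 IH.
  exact: IH adj_vu pos lt_k lose_u1.
Qed.

Section Hypercube.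

Variable n : nat.
Implicit Types (v x y : hypercube_vertex n) (j : 'I_n).

Definition hamming x y : nat := #|[set i | x i != y i]|.

Definition flip x j : hypercube_vertex n :=
  [ffun i => if i == j then ~~ x i else x i].

Lemma hypercube_adjE x y : hypercube_adj x y = (hamming x y == 1).
Proof. by []. Qed.

Lemma hammingC x y : hamming x y = hamming y x.
Proof. by apply: eq_card => i; rewrite !inE eq_sym. Qed.

Lemma hamming_eq0 x y : (hamming x y == 0) = (x == y).
Proof.
rewrite cards_eq0; apply/eqP/eqP => [/setP xy | ->].
  by apply/ffunP => i; move: (xy i); rewrite !inE => /negbFE/eqP.
by apply/setP => i; rewrite !inE eqxx.
Qed.

Lemma hammingxx x : hamming x x = 0.
Proof. by apply/eqP; rewrite hamming_eq0. Qed.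

Lemma hamming_flip v x j :
  hamming v (flip x j) = if x j != v j then (hamming v x).-1 else (hamming v x).+1.
Proof.
rewrite /hamming; case: ifPn => xj.
  rewrite [in RHS](cardsD1 j) inE eq_sym xj add1n /=; apply: eq_card => i.
  rewrite !inE ffunE; case: (eqVneq i j) => [->|//] /=.
  by move: xj; case: (x j); case: (v j).
have -> : [set i | v i != flip x j i] = j |: [set i | v i != x i].
  apply/setP => i; rewrite !inE ffunE; case: (eqVneq i j) => [->|//] /=.
  by move: xj; case: (x j); case: (v j).
by rewrite cardsU1 inE eq_sym xj.
Qed.

Lemma odd_hamming_flip v x j : odd (hamming v (flip x j)) = ~~ odd (hamming v x).
Proof.
rewrite hamming_flip; case: ifPn => // xj.
have : hamming v x != 0 by rewrite hamming_eq0; apply: contraNneq xj => ->.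
by case: (hamming v x) => //= d _; rewrite negbK.
Qed.

Lemma flip_inj x : injective (flip x).
Proof.
move=> j1 j2 /ffunP /(_ j1); rewrite !ffunE eqxx.
by case: eqVneq => // _; case: (x j1).
Qed.

Lemma hypercube_adj_flip x j : hypercube_adj x (flip x j).
Proof.
by apply/eqP; rewrite -[LHS]/(hamming x (flip x j)) hamming_flip eqxx hammingxx.
Qed.

Lemma hypercube_adjP x y : reflect (exists j, y = flip x j) (hypercube_adj x y).
Proof.
apply: (iffP idP) => [/cards1P [j /setP xy] | [j ->]]; last exact: hypercube_adj_flip.
exists j; apply/ffunP => i; rewrite ffunE.
by move: (xy i); rewrite !inE; case: (eqVneq i j) => [->|_];
   case: (x _); case: (y _).
Qed.

Lemma odd_hamming_adj v x y :
  hypercube_adj x y -> odd (hamming v y) = ~~ odd (hamming v x).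
Proof. by case/hypercube_adjP => j ->; apply: odd_hamming_flip. Qed.

Lemma binary_unit_weights :
  binary_weights (@hypercube_adj n) (unit_weights (@hypercube_adj n)).
Proof.
split=> x y; rewrite /unit_weights.
- by rewrite !hypercube_adjE hammingC.
- by case: ifP.
- by case: ifP.
Qed.

Lemma live_deg_unit_weights (L : pred (hypercube_vertex n)) x :
  live_deg (unit_weights (@hypercube_adj n)) L x = #|[set j | L (flip x j)]|.
Proof.
rewrite /live_deg -(card_imset _ (@flip_inj x)); apply: eq_card => y.
rewrite inE /unit_weights; case: ifPn => [/hypercube_adjP [j ->] | not_adj].
  by rewrite mem_imset ?inE ?andbT //; apply: flip_inj.
by rewrite andbF; apply/esym/imsetP => [[j _ yE]]; rewrite yE hypercube_adj_flip in not_adj.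
Qed.

Lemma hypercube_lose_even v :
  ~~ odd n -> nim_lose (@hypercube_adj n) v (unit_weights (@hypercube_adj n)).
Proof.
move=> even_n.
apply: (@nim_lose_even_live_deg _ _ (fun x => ~~ odd (hamming v x))).
- by move=> x y /(odd_hamming_adj v) ->; rewrite negbK.
- exact: binary_unit_weights.
- by rewrite hammingxx.
- move=> x /negbNE odd_x; rewrite live_deg_unit_weights.
  have -> : [set j | ~~ odd (hamming v (flip x j))] = setT.
    by apply/setP => j; rewrite !inE odd_hamming_flip odd_x.
  by rewrite cardsT card_ord even_n.
Qed.

Lemma live_deg_hypercube_adj_other v x :
  x != v -> ~~ hypercube_adj v x ->
  ~~ odd (live_deg (unit_weights (@hypercube_adj n)) (hypercube_adj v) x).
Proof.
move=> neq_xv not_adj; rewrite live_deg_unit_weights.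
have hvx0 : (hamming v x == 0) = false by rewrite hamming_eq0 eq_sym (negbTE neq_xv).
have -> : [set j | hypercube_adj v (flip x j)] =
          [set j | (x j != v j) && (hamming v x == 2)].
  apply/setP => j; rewrite !inE hypercube_adjE hamming_flip.
  by case: ifP => _ //=; case: (hamming v x) hvx0 => [|[|[|]]].
have [hvx2|_] := eqVneq (hamming v x) 2; last by under eq_finset do rewrite andbF; rewrite cards0.
by apply/negP; under eq_finset do rewrite andbT; rewrite -[#|_|]/(hamming x v) hammingC hvx2.
Qed.

Lemma hypercube_win_odd v :
  odd n -> nim_win (@hypercube_adj n) v (unit_weights (@hypercube_adj n)).
Proof.
move=> odd_n; set w := unit_weights _; set y := flip v (Ordinal (odd_gt0 odd_n)).
have adj_vy : hypercube_adj v y by apply: hypercube_adj_flip.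
have wvy : 0 < w v y by rewrite /w /unit_weights adj_vy.
have neq_vy : v != y by apply: (contraTneq _ adj_vy) => <-; rewrite hypercube_adjE hammingxx.
apply: (NimWin adj_vy wvy wvy).
apply: (@nim_lose_even_live_deg _ _ (hypercube_adj v)) => //.
- move=> x z /(odd_hamming_adj v) odd_z; rewrite !hypercube_adjE => /eqP hvx.
  by apply/eqP => hvz; move: odd_z; rewrite hvx hvz.
- exact/binary_weights_upd0/binary_unit_weights.
- move=> x not_adj; have [->|neq_xv] := eqVneq x v.
    have deg_v : live_deg w (hypercube_adj v) v = n.
      rewrite live_deg_unit_weights -[RHS]card_ord -cardsT.
      by apply: eq_card => j; rewrite !inE hypercube_adj_flip.
    by move: (odd_n); rewrite -[X in odd X]deg_v (live_deg_upd0l _ neq_vy wvy) adj_vy addn1.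
  have neq_xy : x != y by apply: contraNneq not_adj => ->.
  by rewrite live_deg_upd0_other //; apply: live_deg_hypercube_adj_other.
Qed.

End Hypercube.

Theorem mainTheorem5 (n : nat) (v : hypercube_vertex n) :
  1 <= n ->
  (nim_lose (@hypercube_adj n) v (unit_weights (@hypercube_adj n)) <-> ~~ odd n).
Proof.
move=> _; split=> [lose_v | /hypercube_lose_even //].
by apply/negP => /(hypercube_win_odd v) /nim_win_not_lose.
Qed.
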